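(* Let $\lambda=(\lambda_1,\dots,\lambda_r)$ be a partition of $n\ge1$. The Sprague–Grundy value $\mathbb{SG}(\mathcal{D}(\lambda))$ can be computed in $O(\log r)\le O(\log n)$ time units.
   Context: A partition of $n$ is a non-increasing sequence $\lambda_1\ge\dots\ge\lambda_r>0$ of integers with sum $n$, given as input as the list $(\lambda_1,\dots,\lambda_r)$ with random access to its entries. For non-negative $i,j$, $\lambda[i,j]$ is $(\lambda_{i+1}-j,\dots,\lambda_r-j)$ with all non-positive entries removed. Downright: positions $\mathcal{D}(\mu)$, $\mu$ nonempty with $s$ parts; move to $\mathcal{D}(\mu[1,0])$ allowed iff $s>1$, move to $\mathcal{D}(\mu[0,1])$ allowed iff $\mu_1>1$. Normal play; $\mathbb{SG}(A)=\operatorname{mex}\{\mathbb{SG}(B):A\to B\}$. A time unit is any of: reading one integer (entry) of the input, one basic arithmetic operation on integers (addition, subtraction, multiplication or division by 2, parity, comparison), or computing the mex of a set of at most two integers from $\{0,1,2\}$. *)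

From Stdlib Require Import List ZArith Arith Lia.
Import ListNotations.

Definition is_partition (n : nat) (lam : list nat) : Prop :=
  (forall x, In x lam -> 0 < x) /\
  (forall i, S i < length lam -> nth (S i) lam 0 <= nth i lam 0) /\
  list_sum lam = n.

Definition shift10 (mu : list nat) : list nat := tl mu.
Definition shift01 (mu : list nat) : list nat :=
  filter (fun x => Nat.ltb 0 x) (map (fun x => x - 1) mu).

Fixpoint mex_from (k fuel : nat) (l : list nat) : nat :=
  match fuel with
  | 0 => k
  | S f => if existsb (Nat.eqb k) l then mex_from (S k) f l else k
  end.
Definition mex (l : list nat) : nat := mex_from 0 (S (length l)) l.

Definition options (g : list nat -> nat) (mu : list nat) : list nat :=
  (if Nat.ltb 1 (length mu) then [g (shift10 mu)] else []) ++
  (if Nat.ltb 1 (hd 0 mu) then [g (shift01 mu)] else []).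

(* Grundy value with fuel; every move strictly decreases the sum of
   parts, so fuel = sum of parts suffices. *)
Fixpoint sg_fuel (fuel : nat) (mu : list nat) : nat :=
  match fuel with
  | 0 => 0
  | S f => mex (options (sg_fuel f) mu)
  end.

Definition SG (mu : list nat) : nat := sg_fuel (list_sum mu) mu.

(* Cost model: a register machine (unit-cost RAM) whose every         *)
(* instruction costs one time unit.  The program is a fixed finite    *)
(* list of instructions; registers hold integers.                     *)

Inductive instr : Type :=
| IConst  (d : nat) (c : Z)
| IMov    (d a : nat)
| IRead   (d a : nat)                (* R[d] := lambda_{R[a]} (1-based; 0 if out of range) *)
| IAdd    (d a b : nat)
| ISub    (d a b : nat)
| IMul    (d a b : nat)
| IHalf   (d a : nat)
| IDouble (d a : nat)
| IParity (d a : nat)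
| IMex0   (d : nat)
| IMex1   (d a : nat)
| IMex2   (d a b : nat)
| IJlt    (a b l : nat)
| IJeq    (a b l : nat)
| IJmp    (l : nat)
| IHalt   (a : nat).

Definition regs := nat -> Z.

Definition upd (R : regs) (d : nat) (v : Z) : regs :=
  fun i => if Nat.eqb i d then v else R i.

Definition mexZ (l : list Z) : Z :=
  Z.of_nat (mex (map Z.to_nat (filter (fun z => Z.leb 0 z) l))).

Definition read_entry (lam : list nat) (v : Z) : Z :=
  if Z.ltb 0 v then Z.of_nat (nth (Z.to_nat v - 1) lam 0) else 0%Z.

Fixpoint run (p : list instr) (lam : list nat) (fuel pc : nat) (R : regs)
  : option Z :=
  match fuel with
  | 0 => None
  | S f =>
    match nth_error p pc with
    | None => None
    | Some i =>
      match i with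
      | IConst d c    => run p lam f (S pc) (upd R d c)
      | IMov d a      => run p lam f (S pc) (upd R d (R a))
      | IRead d a     => run p lam f (S pc) (upd R d (read_entry lam (R a)))
      | IAdd d a b    => run p lam f (S pc) (upd R d (R a + R b)%Z)
      | ISub d a b    => run p lam f (S pc) (upd R d (R a - R b)%Z)
      | IMul d a b    => run p lam f (S pc) (upd R d (R a * R b)%Z)
      | IHalf d a     => run p lam f (S pc) (upd R d (Z.div (R a) 2))
      | IDouble d a   => run p lam f (S pc) (upd R d (2 * R a)%Z)
      | IParity d a   => run p lam f (S pc) (upd R d (Z.modulo (R a) 2))
      | IMex0 d       => run p lam f (S pc) (upd R d (mexZ []))
      | IMex1 d a     => run p lam f (S pc) (upd R d (mexZ [R a]))
      | IMex2 d a b   => run p lam f (S pc) (upd R d (mexZ [R a; R b]))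
      | IJlt a b l    => run p lam f (if Z.ltb (R a) (R b) then l else S pc) R
      | IJeq a b l    => run p lam f (if Z.eqb (R a) (R b) then l else S pc) R
      | IJmp l        => run p lam f l R
      | IHalt a       => Some (R a)
      end
    end
  end.

Definition init_regs (r n : nat) : regs :=
  fun i => match i with 0 => Z.of_nat r | 1 => Z.of_nat n | _ => 0%Z end.

(* When lambda_2 >= 2, removing the first row and removing the first column
   commute, so the two options of D(lambda) share the option D(lambda[1,1]); a
   mex computation over this commuting square, by induction, gives
   SG(lambda) = SG(lambda[1,1]).  Iterating d - 1 times, where d is the side of
   the Durfee square, leaves a hook with arm lambda_d - d and leg L - d (L the
   number of parts >= d), whose value depends only on the parities of arm and
   leg.  A register machine finds d and L by two binary searches over the
   r parts, O(log r) steps each, and then evaluates the hook formula. *)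

From Stdlib Require Import List ZArith Arith Lia Wf_nat.
Import ListNotations.

Definition antitone_nth (mu : list nat) : Prop :=
  forall i j, i <= j -> nth j mu 0 <= nth i mu 0.

Definition diagram (mu : list nat) : Prop :=
  Forall (fun x => 0 < x) mu /\ antitone_nth mu.

Lemma diagram_of_partition n lam : is_partition n lam -> diagram lam.
Proof.
  intros [Hpos [Hstep _]]. split; [apply Forall_forall; exact Hpos|].
  assert (Hs : forall i, nth (S i) lam 0 <= nth i lam 0).
  { intro i. destruct (Nat.lt_ge_cases (S i) (length lam)); auto.
    rewrite (nth_overflow lam 0 (n := S i)) by lia. lia. }
  intros i j Hij. induction Hij; [lia|]. specialize (Hs m). lia.
Qed.

Lemma diagram_nth_pos mu k : diagram mu -> k < length mu <-> 0 < nth k mu 0.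
Proof.
  intros [Hpos _]. rewrite Forall_forall in Hpos. split; intro H.
  - apply Hpos, nth_In, H.
  - destruct (Nat.lt_ge_cases k (length mu)); auto. rewrite nth_overflow in H; lia.
Qed.

Lemma antitone_nth_tl mu : antitone_nth mu -> antitone_nth (tl mu).
Proof.
  intros H i j Hij. destruct mu; simpl; [destruct i, j; auto|].
  apply (H (S i) (S j)); lia.
Qed.

Lemma nth_filter_pos mu i :
  antitone_nth mu -> nth i (filter (Nat.ltb 0) mu) 0 = nth i mu 0.
Proof.
  revert i; induction mu as [|x mu IH]; intros i H; [destruct i; reflexivity|].
  simpl. destruct (Nat.ltb_spec 0 x) as [Hx|Hx].
  - destruct i; [reflexivity|]. apply IH, (antitone_nth_tl (x :: mu)), H.
  - assert (Hz : forall k, nth k (x :: mu) 0 = 0).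
    { intro k. specialize (H 0 k (Nat.le_0_l k)). change (nth 0 (x :: mu) 0) with x in H. lia. }
    rewrite IH by apply (antitone_nth_tl (x :: mu)), H.
    exact (eq_trans (Hz (S i)) (eq_sym (Hz i))).
Qed.

Lemma nth_shift10 mu i : nth i (shift10 mu) 0 = nth (S i) mu 0.
Proof. destruct mu; [destruct i|]; reflexivity. Qed.

Lemma nth_map_sub1 mu i : nth i (map (fun x => x - 1) mu) 0 = nth i mu 0 - 1.
Proof. revert i; induction mu; intros [|i]; simpl; auto. Qed.

Lemma nth_shift01 mu i : antitone_nth mu -> nth i (shift01 mu) 0 = nth i mu 0 - 1.
Proof.
  intro H. unfold shift01. rewrite nth_filter_pos; [apply nth_map_sub1|].
  intros j k Hjk. rewrite !nth_map_sub1. specialize (H j k Hjk). lia.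
Qed.

Lemma diagram_shift10 mu : diagram mu -> diagram (shift10 mu).
Proof.
  intros [Hpos H]. split; [|apply antitone_nth_tl, H].
  destruct mu; simpl; [constructor|]. inversion Hpos; assumption.
Qed.

Lemma Forall_pos_shift01 mu : Forall (fun x => 0 < x) (shift01 mu).
Proof.
  apply Forall_forall. intros x Hx. apply filter_In in Hx as [_ Hx]. apply Nat.ltb_lt, Hx.
Qed.

Lemma diagram_shift01 mu : diagram mu -> diagram (shift01 mu).
Proof.
  intros [_ H]. split; [apply Forall_pos_shift01|].
  intros i j Hij. rewrite !nth_shift01 by exact H. specialize (H i j Hij). lia.
Qed.

Lemma sum_shift01 mu :
  Forall (fun x => 0 < x) mu -> list_sum (shift01 mu) + length mu = list_sum mu.
Proof.
  induction mu as [|x mu IH]; intro Hpos; [reflexivity|]. inversion Hpos; subst.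
  unfold shift01 in *. simpl. destruct (Nat.ltb_spec 0 (x - 1)); simpl;
    rewrite <- IH by assumption; lia.
Qed.

Lemma shift01_shift10_comm mu :
  2 <= hd 0 mu -> shift10 (shift01 mu) = shift01 (shift10 mu).
Proof.
  destruct mu as [|x mu]; simpl; intro H; [lia|]. unfold shift01; simpl.
  destruct (Nat.ltb_spec 0 (x - 1)); [reflexivity|lia].
Qed.

Lemma sg_fuel_indep f1 f2 mu : Forall (fun x => 0 < x) mu ->
  list_sum mu <= f1 -> list_sum mu <= f2 -> sg_fuel f1 mu = sg_fuel f2 mu.
Proof.
  revert f2 mu. induction f1 as [|f1 IH]; intros f2 mu Hpos H1 H2.
  - destruct mu as [|x mu]; [destruct f2; reflexivity|]. inversion Hpos; simpl in H1; lia.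
  - destruct f2 as [|f2].
    + destruct mu as [|x mu]; [reflexivity|]. inversion Hpos; simpl in H2; lia.
    + destruct mu as [|x mu]; [reflexivity|]. inversion Hpos; subst.
      pose proof (sum_shift01 (x :: mu) Hpos). simpl in *.
      unfold options. do 2 f_equal.
      * destruct (Nat.ltb 1 (length (x :: mu))); [|reflexivity].
        f_equal. apply IH; cbn [shift10 tl]; (assumption || lia).
      * destruct (Nat.ltb_spec 1 (hd 0 (x :: mu))); [|reflexivity].
        f_equal. apply IH; [apply Forall_pos_shift01|lia|lia].
Qed.

Lemma SG_unfold mu : Forall (fun x => 0 < x) mu -> SG mu = mex (options SG mu).
Proof.
  intro Hpos. unfold SG. destruct mu as [|x mu]; [reflexivity|]. inversion Hpos; subst.
  pose proof (sum_shift01 (x :: mu) Hpos).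
  destruct (list_sum (x :: mu)) as [|s] eqn:Es; [simpl in Es; lia|].
  simpl in Es |- *. unfold options. do 2 f_equal.
  - destruct (Nat.ltb 1 (length (x :: mu))); [|reflexivity].
    f_equal. apply sg_fuel_indep; cbn [shift10 tl]; (assumption || lia).
  - destruct (Nat.ltb_spec 1 (hd 0 (x :: mu))); [|reflexivity].
    f_equal. apply sg_fuel_indep; [apply Forall_pos_shift01|simpl in *; lia|lia].
Qed.

(* [a], [b] are the values of the two options of a position and [v] that of
   their common option; [x], [y] are the values of the options of [v], and
   [c], [t] those of the remaining options of [a] and [b]. *)
Lemma mex_commuting_square (p q pa qb : bool) (a b v c t x y : nat) :
  (p = true -> pa = true) ->
  a = mex ((if pa then [c] else []) ++ [v]) ->
  b = mex ([v] ++ (if qb then [t] else [])) ->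
  v = mex ((if p then [x] else []) ++ (if q then [y] else [])) ->
  (p = true -> a = x) -> (q = true -> b = y) ->
  mex [a; b] = v.
Proof.
  intros Hp Ha Hb Hv Hax Hby.
  destruct p, q.
  - rewrite (Hax eq_refl), (Hby eq_refl), Hv. reflexivity.
  - rewrite (Hax eq_refl), Hb, Hv.
    destruct qb; destruct x as [|[|x]]; try destruct t as [|[|t]]; reflexivity.
  - rewrite (Hby eq_refl), Ha, Hv.
    destruct pa; destruct y as [|[|y]]; try destruct c as [|[|c]]; reflexivity.
  - rewrite Ha, Hb, Hv.
    destruct pa, qb; try destruct c as [|[|c]]; try destruct t as [|[|t]]; reflexivity.
Qed.

Definition shift11 (mu : list nat) : list nat := shift01 (shift10 mu).

Lemma diagram_shift11 mu : diagram mu -> diagram (shift11 mu).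
Proof. intro H. apply diagram_shift01, diagram_shift10, H. Qed.

Lemma nth_shift11 mu i : diagram mu -> nth i (shift11 mu) 0 = nth (S i) mu 0 - 1.
Proof.
  intro H. unfold shift11. rewrite nth_shift01, nth_shift10; [reflexivity|].
  apply diagram_shift10, H.
Qed.

Lemma SG_shift11 mu : diagram mu -> 2 <= nth 1 mu 0 -> SG mu = SG (shift11 mu).
Proof.
  induction mu as [mu IH] using (induction_ltof1 _ list_sum).
  intros Hmu H2. unfold ltof in IH.
  set (A := shift10 mu). set (B := shift01 mu). set (v := shift11 mu).
  assert (H01 : nth 1 mu 0 <= nth 0 mu 0) by (apply (proj2 Hmu); lia).
  assert (HA : diagram A) by apply diagram_shift10, Hmu.
  assert (HB : diagram B) by apply diagram_shift01, Hmu.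
  assert (Hv : diagram v) by apply diagram_shift11, Hmu.
  assert (nA : forall i, nth i A 0 = nth (S i) mu 0) by apply nth_shift10.
  assert (nB : forall i, nth i B 0 = nth i mu 0 - 1) by (intro; apply nth_shift01, Hmu).
  assert (nv : forall i, nth i v 0 = nth (S i) mu 0 - 1) by (intro; apply nth_shift11, Hmu).
  assert (Hlen : forall nu, diagram nu -> (1 <? length nu) = true <-> 0 < nth 1 nu 0).
  { intros nu Hnu. rewrite Nat.ltb_lt. apply diagram_nth_pos, Hnu. }
  assert (Hhd : forall nu, (1 <? hd 0 nu) = true <-> 1 < nth 0 nu 0).
  { intro nu. rewrite Nat.ltb_lt. destruct nu; reflexivity. }
  assert (EB : shift10 B = v) by (apply shift01_shift10_comm; destruct mu; simpl in *; lia).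
  assert (Hsum : list_sum A < list_sum mu /\ list_sum B < list_sum mu).
  { unfold A, B. destruct mu as [|x mu]; [simpl in H2; lia|]. destruct Hmu as [Hpos _].
    pose proof (sum_shift01 _ Hpos). inversion Hpos; subst. simpl in *. lia. }
  rewrite (SG_unfold mu (proj1 Hmu)). unfold options.
  replace (1 <? length mu) with true by (symmetry; apply (Hlen mu Hmu); lia).
  replace (1 <? hd 0 mu) with true by (symmetry; apply Hhd; lia).
  fold A B. simpl app.
  apply (mex_commuting_square (1 <? length v) (1 <? hd 0 v) (1 <? length A) (1 <? hd 0 B)
           _ _ _ (SG (shift10 A)) (SG (shift01 B)) (SG (shift10 v)) (SG (shift01 v))).
  - rewrite (Hlen v Hv), (Hlen A HA), nv, nA. lia.
  - rewrite (SG_unfold A (proj1 HA)). unfold options.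
    replace (1 <? hd 0 A) with true by (symmetry; apply Hhd; rewrite nA; lia).
    reflexivity.
  - rewrite (SG_unfold B (proj1 HB)). unfold options.
    replace (1 <? length B) with true by (symmetry; apply (Hlen B HB); rewrite nB; lia).
    rewrite EB. reflexivity.
  - apply SG_unfold, Hv.
  - rewrite (Hlen v Hv), nv. intro H3.
    rewrite (IH A (proj1 Hsum) HA) by (rewrite nA; lia).
    assert (hdA : 2 <= hd 0 A) by (rewrite <- (nA 0) in H2; destruct A; exact H2).
    unfold shift11 at 1. rewrite <- (shift01_shift10_comm A hdA). reflexivity.
  - rewrite Hhd, nv. intro H3.
    rewrite (IH B (proj2 Hsum) HB) by (rewrite nB; lia).
    unfold shift11. rewrite EB. reflexivity.
Qed.

Lemma mex_mod2 m : mex [m mod 2] = S m mod 2.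
Proof.
  replace (S m) with (m + 1) by lia. rewrite Nat.Div0.add_mod.
  pose proof (Nat.mod_upper_bound m 2 ltac:(lia)).
  destruct (m mod 2) as [|[|k]]; [reflexivity|reflexivity|lia].
Qed.

Lemma Forall_pos_repeat1 k : Forall (fun x => 0 < x) (repeat 1 k).
Proof. apply Forall_forall. intros x Hx. apply repeat_spec in Hx. lia. Qed.

Lemma SG_row m : SG [S m] = m mod 2.
Proof.
  induction m as [|m IH]; [reflexivity|].
  rewrite SG_unfold by (constructor; [lia|constructor]).
  unfold options. cbn [length hd Nat.ltb Nat.leb app].
  change (shift01 [S (S m)]) with [S m]. rewrite IH. apply mex_mod2.
Qed.

Lemma SG_column k : SG (repeat 1 (S k)) = k mod 2.
Proof.
  induction k as [|k IH]; [reflexivity|].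
  rewrite SG_unfold by apply Forall_pos_repeat1.
  unfold options. cbn [length hd shift10 tl Nat.ltb Nat.leb app repeat].
  change (1 :: repeat 1 k) with (repeat 1 (S k)). rewrite IH. apply mex_mod2.
Qed.

(* The hook [S a :: repeat 1 l] has as options a column of [l] cells and a row
   of [a] cells, whose values are the parities of [l - 1] and [a - 1]. *)
Definition hook_value (a l : nat) : nat :=
  mex ((if 0 <? l then [(l - 1) mod 2] else []) ++
       (if 0 <? a then [(a - 1) mod 2] else [])).

Lemma SG_hook a l : SG (S a :: repeat 1 l) = hook_value a l.
Proof.
  rewrite SG_unfold by (constructor; [lia|apply Forall_pos_repeat1]).
  unfold options, hook_value. cbn [length hd]. rewrite repeat_length. do 2 f_equal.
  - destruct l as [|l]; [reflexivity|]. cbn [shift10 tl]. rewrite SG_column.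
    simpl. replace (l - 0) with l by lia. reflexivity.
  - destruct a as [|a]; [reflexivity|].
    replace (shift01 (S (S a) :: repeat 1 l)) with [S a].
    + rewrite SG_row. simpl. replace (a - 0) with a by lia. reflexivity.
    + unfold shift01. simpl. replace (a - 0) with a by lia. f_equal.
      induction l as [|l IHl]; [reflexivity|exact IHl].
Qed.

Lemma diagram_hook_shape mu : diagram mu -> mu <> [] -> nth 1 mu 0 <= 1 ->
  mu = hd 0 mu :: repeat 1 (length mu - 1).
Proof.
  intros Hmu Hne H1. destruct mu as [|h t]; [congruence|]. cbn [hd length].
  f_equal. apply (nth_ext _ _ 0 0); [rewrite repeat_length; simpl; lia|].
  intros k Hk. rewrite nth_repeat_lt by (simpl in Hk; lia).
  assert (0 < nth (S k) (h :: t) 0) by (apply diagram_nth_pos; [exact Hmu|simpl; lia]).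
  assert (nth (S k) (h :: t) 0 <= nth 1 (h :: t) 0) by (apply (proj2 Hmu); lia).
  simpl in *. lia.
Qed.

Lemma diagram_iter_shift11 k mu : diagram mu -> diagram (Nat.iter k shift11 mu).
Proof. intro Hmu. induction k; [exact Hmu|apply diagram_shift11, IHk]. Qed.

Lemma nth_iter_shift11 k mu i : diagram mu ->
  nth i (Nat.iter k shift11 mu) 0 = nth (i + k) mu 0 - k.
Proof.
  revert i; induction k as [|k IH]; intros i Hmu; simpl.
  - rewrite Nat.add_0_r. lia.
  - rewrite nth_shift11, IH by (apply diagram_iter_shift11 || idtac; exact Hmu).
    replace (S i + k) with (i + S k) by lia. lia.
Qed.

Lemma SG_iter_shift11 k mu : diagram mu ->
  (forall j, j < k -> j + 2 <= nth (j + 1) mu 0) -> SG mu = SG (Nat.iter k shift11 mu).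
Proof.
  intros Hmu H. induction k as [|k IH]; [reflexivity|].
  rewrite IH by (intros j Hj; apply H; lia). simpl.
  apply SG_shift11; [apply diagram_iter_shift11, Hmu|].
  rewrite nth_iter_shift11 by exact Hmu. specialize (H k ltac:(lia)).
  replace (1 + k) with (k + 1) by lia. lia.
Qed.

(* [d] is the side of the Durfee square of [lam] and [L] the number of parts of
   size at least [d]; removing [d - 1] diagonal hooks leaves a single hook. *)
Lemma SG_durfee lam d L : diagram lam -> 1 <= d ->
  d <= nth (d - 1) lam 0 -> nth d lam 0 < d + 1 ->
  d <= nth (L - 1) lam 0 -> nth L lam 0 < d ->
  SG lam = hook_value (nth (d - 1) lam 0 - d) (L - d).
Proof.
  intros Hlam Hd1 Hd Hd' HL HL'.
  assert (HdL : d <= L).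
  { destruct (Nat.le_gt_cases d L) as [|HLd]; [assumption|].
    assert (nth (d - 1) lam 0 <= nth L lam 0) by (apply (proj2 Hlam); lia). lia. }
  rewrite (SG_iter_shift11 (d - 1) lam Hlam).
  2:{ intros j Hj. assert (nth (d - 1) lam 0 <= nth (j + 1) lam 0)
        by (apply (proj2 Hlam); lia). lia. }
  set (H := Nat.iter (d - 1) shift11 lam).
  assert (nH : forall i, nth i H 0 = nth (i + (d - 1)) lam 0 - (d - 1))
    by (intro; apply nth_iter_shift11, Hlam).
  assert (HH : diagram H) by apply diagram_iter_shift11, Hlam.
  assert (Hlen : length H = L - d + 1).
  { assert (L - d < length H).
    { apply diagram_nth_pos; [exact HH|]. rewrite nH.
      replace (L - d + (d - 1)) with (L - 1) by lia. lia. }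
    assert (~ L - d + 1 < length H).
    { rewrite diagram_nth_pos by exact HH. rewrite nH.
      replace (L - d + 1 + (d - 1)) with L by lia. lia. }
    lia. }
  rewrite (diagram_hook_shape H HH).
  - replace (hd 0 H) with (S (nth (d - 1) lam 0 - d)).
    2:{ transitivity (nth 0 H 0); [rewrite nH; simpl (0 + _); lia|destruct H; reflexivity]. }
    rewrite Hlen, Nat.add_sub. apply SG_hook.
  - intros ->. simpl in Hlen. lia.
  - rewrite nH. replace (1 + (d - 1)) with d by lia. lia.
Qed.

(* Register 0 holds r and register 9 the constant 1.  Instructions 6-17
   search for the last k with B k + T <= lambda_k, with lo, hi in registers
   2, 3 and B, T in registers 6, 7: the first pass (register 8 = 0, B = 1,
   T = 0) finds d, the second (register 8 = 1, B = 0, T = d, d saved in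
   register 10) finds L.  Instructions 25-43 output the value of the hook with
   arm lambda_d - d in register 12 and leg L - d in register 13. *)
Definition prog : list instr := [
 IConst 9 1; IConst 6 1; IConst 7 0; IConst 8 0; IConst 2 1; IAdd 3 0 9;
 ISub 5 3 2; IJeq 5 9 18; IAdd 4 2 3; IHalf 4 4; IRead 5 4; IMul 11 6 4; IAdd 11 11 7;
 IJlt 5 11 16; IMov 2 4; IJmp 6; IMov 3 4; IJmp 6;
 IJeq 8 9 25; IMov 10 2; IConst 6 0; IMov 7 2; IConst 8 1; IAdd 3 0 9; IJmp 6;
 IRead 12 10; ISub 12 12 10; ISub 13 2 10; IConst 14 0;
 ISub 15 12 9; IParity 15 15; ISub 16 13 9; IParity 16 16;
 IJeq 12 14 39; IJeq 13 14 37; IMex2 17 16 15; IHalt 17; IMex1 17 15; IHalt 17;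
 IJeq 13 14 42; IMex1 17 16; IHalt 17; IMex0 17; IHalt 17].

Definition reach lam N pc R pc' R' : Prop :=
  forall f, run prog lam (N + f) pc R = run prog lam f pc' R'.

(* Symbolic execution.  It must only be run up to a jump whose condition is
   known: past an undecided jump, cbn unfolds every possible next instruction. *)
Ltac exec :=
  cbn -[upd Z.add Z.sub Z.mul Z.div Z.modulo Z.eqb Z.ltb Z.of_nat read_entry mexZ Nat.modulo].

Lemma upd_eq R d v : upd R d v d = v.
Proof. unfold upd. rewrite Nat.eqb_refl. reflexivity. Qed.

Lemma upd_neq R d v i : i <> d -> upd R d v i = R i.
Proof. intro H. unfold upd. apply Nat.eqb_neq in H. rewrite H. reflexivity. Qed.

Ltac regs := repeat (rewrite upd_eq || rewrite upd_neq by discriminate).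

Lemma reach_trans {lam N1 N2 pc1 R1 pc2 R2 pc3 R3} :
  reach lam N1 pc1 R1 pc2 R2 -> reach lam N2 pc2 R2 pc3 R3 ->
  reach lam (N1 + N2) pc1 R1 pc3 R3.
Proof. intros H1 H2 f. rewrite <- Nat.add_assoc, H1, H2. reflexivity. Qed.

Definition fits (lam : list nat) (B T k : nat) : bool := B * k + T <=? nth (k - 1) lam 0.

Definition same_frame (R R' : regs) : Prop :=
  forall i, i = 0 \/ 6 <= i <= 10 -> R' i = R i.

Lemma read_entry_of_nat lam k :
  1 <= k -> read_entry lam (Z.of_nat k) = Z.of_nat (nth (k - 1) lam 0).
Proof.
  intro H. unfold read_entry. rewrite Nat2Z.id.
  replace (0 <? Z.of_nat k)%Z with true by (symmetry; apply Z.ltb_lt; lia). reflexivity.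
Qed.

Lemma search_test_fits lam B T k : 1 <= k ->
  (read_entry lam (Z.of_nat k) <? Z.of_nat B * Z.of_nat k + Z.of_nat T)%Z
  = negb (fits lam B T k).
Proof.
  intro Hk. rewrite read_entry_of_nat by exact Hk. unfold fits.
  destruct (Nat.leb_spec (B * k + T) (nth (k - 1) lam 0)).
  - apply Z.ltb_ge. lia.
  - apply Z.ltb_lt. lia.
Qed.

Lemma midpoint_between lo hi : S lo < hi -> lo < (lo + hi) / 2 < hi.
Proof.
  intro H. split; [apply Nat.div_le_lower_bound|apply Nat.Div0.div_lt_upper_bound]; lia.
Qed.

Section BinarySearch.

Variables (lam : list nat) (B T : nat).

Definition search_finds (R : regs) (lo N : nat) : Prop :=
  exists R' k, reach lam N 6 R 18 R' /\ same_frame R R' /\ R' 2 = Z.of_nat k /\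
    lo <= k /\ fits lam B T k = true /\ fits lam B T (S k) = false.

Lemma search_exit R lo :
  R 2 = Z.of_nat lo -> R 3 = Z.of_nat (S lo) -> R 9 = 1%Z ->
  fits lam B T lo = true -> fits lam B T (S lo) = false ->
  search_finds R lo 2.
Proof.
  intros H2 H3 H9 Hlo HSlo. exists (upd R 5 (Z.sub (R 3) (R 2))), lo.
  repeat split; try assumption; try lia.
  - intro f. exec. regs. rewrite H2, H3, H9, (proj2 (Z.eqb_eq _ _)) by lia. reflexivity.
  - intros i Hi. apply upd_neq. lia.
Qed.

Lemma search_step R lo hi :
  1 <= lo -> S lo < hi ->
  R 2 = Z.of_nat lo -> R 3 = Z.of_nat hi ->
  R 6 = Z.of_nat B -> R 7 = Z.of_nat T -> R 9 = 1%Z ->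
  let mid := (lo + hi) / 2 in
  exists R', reach lam 10 6 R 6 R' /\ same_frame R R' /\
    R' 2 = Z.of_nat (if fits lam B T mid then mid else lo) /\
    R' 3 = Z.of_nat (if fits lam B T mid then hi else mid).
Proof.
  intros Hlo Hhi H2 H3 H6 H7 H9 mid.
  assert (Hmid : lo < mid < hi) by exact (midpoint_between lo hi Hhi).
  assert (Emid : ((Z.of_nat lo + Z.of_nat hi) / 2)%Z = Z.of_nat mid)
    by (unfold mid; rewrite Nat2Z.inj_div, Nat2Z.inj_add; reflexivity).
  clearbody mid.
  destruct (fits lam B T mid) eqn:Hfit; eexists; split.
  1, 3: change 10 with (2 + (6 + 2)); eapply reach_trans;
    [ intro f; exec; regs; rewrite H2, H3, H9, (proj2 (Z.eqb_neq _ _)) by lia; reflexivity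
    | eapply reach_trans;
      [ intro f; exec; regs; rewrite H2, H3, H6, H7, Emid, search_test_fits, Hfit by lia;
        reflexivity
      | intro f; exec; reflexivity ] ].
  all: split; [intros i Hi; rewrite !upd_neq by lia; reflexivity|].
  all: split; regs; rewrite ?H2, ?H3, ?Emid; reflexivity.
Qed.

Lemma search_finds_step R R1 lo lo' N :
  reach lam 10 6 R 6 R1 -> same_frame R R1 -> lo <= lo' ->
  search_finds R1 lo' N -> search_finds R lo (10 + N).
Proof.
  intros Hr1 Hframe1 Hle (R' & k & Hr & Hframe & R'_2 & Hk & Hfk & HfSk).
  exists R', k. repeat split; try assumption; try lia.
  - exact (reach_trans Hr1 Hr).
  - intros i Hi. rewrite Hframe, Hframe1 by exact Hi. reflexivity.
Qed.

(* The invariant is [fits lo] and not [fits hi]; no monotonicity of [fits] is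
   needed to end at some [k] with [fits k] and not [fits (S k)]. *)
Lemma binary_search K : forall lo hi R,
  1 <= lo < hi -> hi - lo <= 2 ^ K ->
  R 2 = Z.of_nat lo -> R 3 = Z.of_nat hi ->
  R 6 = Z.of_nat B -> R 7 = Z.of_nat T -> R 9 = 1%Z ->
  fits lam B T lo = true -> fits lam B T hi = false ->
  exists N, N <= 10 * K + 2 /\ search_finds R lo N.
Proof.
  induction K as [|K IH]; intros lo hi R Hlo Hgap H2 H3 H6 H7 H9 Hflo Hfhi;
    (destruct (Nat.eq_dec hi (S lo)) as [->|Hhi];
     [exists 2; split; [lia|apply search_exit; assumption]|]).
  - simpl in Hgap. lia.
  - destruct (search_step R lo hi ltac:(lia) ltac:(lia) H2 H3 H6 H7 H9)
      as (R1 & Hr1 & Hframe1 & R1_2 & R1_3).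
    set (mid := (lo + hi) / 2) in R1_2, R1_3.
    assert (Hmid : lo < mid < hi) by exact (midpoint_between lo hi ltac:(lia)).
    assert (Hhalves : mid - lo <= 2 ^ K /\ hi - mid <= 2 ^ K).
    { pose proof (Nat.div_mod_eq (lo + hi) 2 : lo + hi = 2 * mid + (lo + hi) mod 2).
      pose proof (Nat.mod_upper_bound (lo + hi) 2 ltac:(lia)). simpl in Hgap. lia. }
    enough (exists N, N <= 10 * K + 2 /\ search_finds R1 (if fits lam B T mid then mid else lo) N)
      as (N & HN & Hfound).
    { exists (10 + N). split; [lia|].
      eapply (search_finds_step R R1 lo _ N Hr1 Hframe1); [|exact Hfound].
      destruct (fits lam B T mid); lia. }
    destruct (fits lam B T mid) eqn:Hfmid; [apply (IH mid hi R1)|apply (IH lo mid R1)];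
      rewrite ?Hframe1 by lia; (assumption || lia).
Qed.

End BinarySearch.

Lemma mexZ_of_nat l : mexZ (map Z.of_nat l) = Z.of_nat (mex l).
Proof.
  unfold mexZ. do 2 f_equal. induction l as [|x l IH]; [reflexivity|]. simpl.
  replace (0 <=? Z.of_nat x)%Z with true by (symmetry; apply Z.leb_le; lia).
  simpl. rewrite Nat2Z.id, IH. reflexivity.
Qed.

Lemma mod2_pred_of_nat a : ((Z.of_nat (S a) - 1) mod 2)%Z = Z.of_nat (a mod 2).
Proof. rewrite Nat2Z.inj_mod. f_equal. lia. Qed.

Lemma run_jeq lam f pc a b l R : nth_error prog pc = Some (IJeq a b l) ->
  run prog lam (S f) pc R = run prog lam f (if (R a =? R b)%Z then l else S pc) R.
Proof. intro H. simpl. rewrite H. reflexivity. Qed.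

Lemma of_nat_eqb_0 m : (Z.of_nat m =? 0)%Z = (m =? 0).
Proof. destruct m; reflexivity. Qed.

Lemma hook_output lam R a l f :
  R 12 = Z.of_nat a -> R 13 = Z.of_nat l -> R 14 = 0%Z ->
  R 15 = Z.modulo (Z.sub (R 12) 1) 2 -> R 16 = Z.modulo (Z.sub (R 13) 1) 2 ->
  run prog lam (4 + f) 33 R = Some (Z.of_nat (hook_value a l)).
Proof.
  intros H12 H13 H14 H15 H16. change (4 + f) with (S (S (2 + f))).
  unfold hook_value. rewrite <- mexZ_of_nat.
  erewrite run_jeq by reflexivity. rewrite H12, H14, of_nat_eqb_0.
  destruct a as [|a]; cbn [Nat.eqb];
    erewrite run_jeq by reflexivity; rewrite H13, H14, of_nat_eqb_0;
    destruct l as [|l]; exec; regs; rewrite ?H15, ?H16, ?H12, ?H13, ?mod2_pred_of_nat, ?Nat.sub_0_r;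
    reflexivity.
Qed.

Lemma durfee_phase lam n K : diagram lam -> lam <> [] -> length lam <= 2 ^ K ->
  exists N R d, N <= 10 * K + 8 /\ reach lam N 0 (init_regs (length lam) n) 18 R /\
    R 0 = Z.of_nat (length lam) /\ R 8 = 0%Z /\ R 9 = 1%Z /\ R 2 = Z.of_nat d /\
    1 <= d /\ d <= nth (d - 1) lam 0 /\ nth d lam 0 < d + 1.
Proof.
  intros Hlam Hne HK.
  assert (Hr : 1 <= length lam) by (destruct lam; [congruence|simpl; lia]).
  assert (Hinit : exists R0, reach lam 6 0 (init_regs (length lam) n) 6 R0 /\
      R0 0 = Z.of_nat (length lam) /\ R0 2 = 1%Z /\ R0 3 = Z.of_nat (S (length lam)) /\
      R0 6 = 1%Z /\ R0 7 = 0%Z /\ R0 8 = 0%Z /\ R0 9 = 1%Z).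
  { eexists. split; [intro f; exec; reflexivity|]. repeat split; cbn; lia. }
  destruct Hinit as (R0 & Hinit & R0_0 & R0_2 & R0_3 & R0_6 & R0_7 & R0_8 & R0_9).
  destruct (binary_search lam 1 0 K 1 (S (length lam)) R0 ltac:(lia) ltac:(lia)
              R0_2 R0_3 R0_6 R0_7 R0_9)
    as (N & HN & R & d & Hrun & Hframe & R2 & Hd & Hfd & Hfd').
  - apply Nat.leb_le. apply (diagram_nth_pos lam 0 Hlam). lia.
  - apply Nat.leb_gt. rewrite nth_overflow by (simpl; lia). lia.
  - exists (6 + N), R, d. unfold fits in Hfd, Hfd'.
    apply Nat.leb_le in Hfd. apply Nat.leb_gt in Hfd'. simpl in Hfd'. rewrite Nat.sub_0_r in Hfd'.
    repeat split; try lia.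
    + exact (reach_trans Hinit Hrun).
    + rewrite Hframe by lia. exact R0_0.
    + rewrite Hframe by lia. exact R0_8.
    + rewrite Hframe by lia. exact R0_9.
Qed.

Lemma leg_phase lam K R d : diagram lam -> length lam <= 2 ^ K ->
  R 0 = Z.of_nat (length lam) -> R 8 = 0%Z -> R 9 = 1%Z -> R 2 = Z.of_nat d ->
  1 <= d -> d <= nth (d - 1) lam 0 ->
  exists N R' L, N <= 10 * K + 10 /\ reach lam N 18 R 25 R' /\
    R' 2 = Z.of_nat L /\ R' 9 = 1%Z /\ R' 10 = Z.of_nat d /\
    d <= L /\ d <= nth (L - 1) lam 0 /\ nth L lam 0 < d.
Proof.
  intros Hlam HK H0 H8 H9 H2 Hd1 Hd.
  assert (Hdr : d <= length lam)
    by (enough (d - 1 < length lam) by lia; apply diagram_nth_pos; [exact Hlam|lia]).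
  assert (Hswitch : exists R1, reach lam 7 18 R 6 R1 /\
      R1 2 = Z.of_nat d /\ R1 3 = Z.of_nat (S (length lam)) /\ R1 6 = 0%Z /\
      R1 7 = Z.of_nat d /\ R1 8 = 1%Z /\ R1 9 = 1%Z /\ R1 10 = Z.of_nat d).
  { eexists. split.
    - intro f. change (7 + f) with (S (6 + f)).
      erewrite run_jeq by reflexivity. rewrite H8, H9. cbn [Z.eqb]. exec. reflexivity.
    - repeat split; cbn; lia. }
  destruct Hswitch as (R1 & Hr1 & R1_2 & R1_3 & R1_6 & R1_7 & R1_8 & R1_9 & R1_10).
  destruct (binary_search lam 0 d K d (S (length lam)) R1 ltac:(lia) ltac:(lia)
              R1_2 R1_3 R1_6 R1_7 R1_9)
    as (N & HN & R' & L & Hrun & Hframe & R'_2 & HL & HfL & HfL').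
  - apply Nat.leb_le. lia.
  - apply Nat.leb_gt. rewrite nth_overflow by (simpl; lia). lia.
  - assert (Hexit : reach lam 1 18 R' 25 R').
    { intro f. erewrite run_jeq by reflexivity.
      rewrite !Hframe, R1_8, R1_9 by lia. reflexivity. }
    exists (7 + N + 1), R', L. unfold fits in HfL, HfL'.
    apply Nat.leb_le in HfL. apply Nat.leb_gt in HfL'. simpl in HfL'. rewrite Nat.sub_0_r in HfL'.
    repeat split; try lia.
    + exact (reach_trans (reach_trans Hr1 Hrun) Hexit).
    + rewrite Hframe by lia. exact R1_9.
    + rewrite Hframe by lia. exact R1_10.
Qed.

Lemma output_phase lam R d L f : 1 <= d -> d <= nth (d - 1) lam 0 -> d <= L ->
  R 2 = Z.of_nat L -> R 9 = 1%Z -> R 10 = Z.of_nat d ->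
  run prog lam (12 + f) 25 R = Some (Z.of_nat (hook_value (nth (d - 1) lam 0 - d) (L - d))).
Proof.
  intros Hd1 Hd HdL H2 H9 H10.
  assert (Hhook : exists R1, reach lam 8 25 R 33 R1 /\
      R1 12 = Z.of_nat (nth (d - 1) lam 0 - d) /\ R1 13 = Z.of_nat (L - d) /\ R1 14 = 0%Z /\
      R1 15 = Z.modulo (Z.sub (R1 12) 1) 2 /\ R1 16 = Z.modulo (Z.sub (R1 13) 1) 2).
  { eexists. split; [intro f'; exec; reflexivity|].
    regs. rewrite H2, H9, H10, read_entry_of_nat by exact Hd1. repeat split; lia. }
  destruct Hhook as (R1 & Hr1 & R1_12 & R1_13 & R1_14 & R1_15 & R1_16).
  change (12 + f) with (8 + (4 + f)). rewrite Hr1. apply hook_output; assumption.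
Qed.

Theorem mainTheorem14 :
  exists (p : list instr) (C : nat),
    forall (n : nat) (lam : list nat),
      1 <= n -> is_partition n lam ->
      run p lam (C * (Nat.log2 (length lam) + 1)) 0
          (init_regs (length lam) n)
      = Some (Z.of_nat (SG lam)).
Proof.
  exists prog, 50. intros n lam Hn Hpart.
  pose proof (diagram_of_partition n lam Hpart) as Hlam.
  assert (Hne : lam <> []).
  { intros ->. destruct Hpart as (_ & _ & Hsum). simpl in Hsum. lia. }
  set (K := Nat.log2 (length lam) + 1).
  assert (HK : length lam <= 2 ^ K).
  { unfold K. rewrite Nat.add_1_r. apply Nat.lt_le_incl, Nat.log2_spec.
    destruct lam; [congruence|simpl; lia]. }
  destruct (durfee_phase lam n K Hlam Hne HK)
    as (N1 & R1 & d & HN1 & Hr1 & R1_0 & R1_8 & R1_9 & R1_2 & Hd1 & Hd & Hd').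
  destruct (leg_phase lam K R1 d Hlam HK R1_0 R1_8 R1_9 R1_2 Hd1 Hd)
    as (N2 & R2 & L & HN2 & Hr2 & R2_2 & R2_9 & R2_10 & HdL & HL & HL').
  rewrite (SG_durfee lam d L) by assumption.
  replace (50 * K) with (N1 + (N2 + (12 + (50 * K - N1 - N2 - 12)))) by lia.
  rewrite Hr1, Hr2. apply output_phase; assumption.
Qed.
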